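(* Let $\Delta\subset\mathbb{R}^n$ be an $n$-dimensional integral polytope containing the origin and having a unique codimension-1 face $\delta$ not containing the origin, with $\Delta$ the convex hull of $\delta$ and the origin. Let $A=\{V_1,\dots,V_J\}\subset\delta\cap\mathbb{Z}^n$ contain all vertices of $\delta$, let $T=\{\delta_1,\dots,\delta_h\}$ be a regular decomposition of $(\delta,A)$ with associated concave function $\phi$, and let $f=\sum_{j=1}^J a_jx^{V_j}$ with the $a_j$ regarded as indeterminates. If $r\in\Sigma_i$ for some $1\le i\le h$ (and $r$ is a lattice point), then $d(\phi,F_r(f)-F_r(f_{\Sigma_i}))<m(\phi,A;r)$.
   Context: $C(\Delta)$ is the closed cone generated by $\Delta$ and the origin; $w(r)$ is the least $c\ge0$ with $r\in c\Delta$. A regular decomposition of $(\delta,A)$ is a collection of polytopes $\delta_1,\dots,\delta_h$ with vertices in $A$, of full dimension in $\delta$, whose union is $\delta$ and whose pairwise intersections have lower dimension, with a piecewise linear concave $\phi:\delta\to\mathbb{R}$ whose domains of linearity are exactly the $\delta_i$; $\phi$ is extended to $C(\Delta)\setminus\{0\}$ by $\phi(r)=w(r)\phi(r/w(r))$. $\Sigma_i$ is the closed cone generated by $\delta_i$ and the origin, and $f_{\Sigma_i}=\sum_{V_j\in\Sigma_i}a_jx^{V_j}$. $m(\phi,A;r)=\sup\{\sum_j u_j\phi(V_j):\sum_ju_jV_j=r,\ u_j\ge0\}$. Let $\pi$ satisfy $\sum_{m\ge0}\pi^{p^m}/p^m=0$, $\mathrm{ord}_p\pi=1/(p-1)$,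 and let $E(t)=\exp(\sum_{m\ge0}t^{p^m}/p^m)=\sum_m\lambda_mt^m$ be the Artin–Hasse exponential. For $r\in\mathbb{Z}^n$, $F_r(f)=\sum_u\big(\prod_{j=1}^J\lambda_{u_j}a_j^{u_j}\big)\pi^{u_1+\dots+u_J}$, summed over all integral $u=(u_1,\dots,u_J)$ with $u_j\ge0$ and $\sum_ju_jV_j=r$ (and similarly $F_r(f_{\Sigma_i})$ using only the $V_j\in\Sigma_i$). For a polynomial $F=\sum_u\lambda_u\prod_ja_j^{u_j}$, its $\phi$-degree is $d(\phi,F)=\max\{\sum_ju_j\phi(V_j):\lambda_u\neq0\}$, with $d(\phi,0)=-\infty$. *)

From HB Require Import structures.
From mathcomp Require Import all_boot all_order all_algebra.
From mathcomp Require Import boolp classical_sets reals constructive_ereal ereal.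
Set Implicit Arguments. Unset Strict Implicit. Unset Printing Implicit Defensive.
Import Order.TTheory GRing.Theory Num.Theory.
Local Open Scope classical_set_scope.
Local Open Scope ring_scope.

Section Geometry.
Variables (R : realType) (n : nat).
Local Notation vec := 'rV[R]_n.

Definition dotv (a x : vec) : R := \sum_(k < n) a 0 k * x 0 k.

Definition intvec (x : vec) : Prop := forall k, x 0 k \is a Num.int.

Definition conv (X : set vec) : set vec :=
  [set y | exists (k : nat) (t : 'I_k -> R) (x : 'I_k -> vec),
     (forall l, 0 <= t l /\ X (x l)) /\ \sum_l t l = 1 /\ y = \sum_l t l *: x l].

(* cone generated by X and the origin: all finite nonnegative combinations
   (for the compact convex sets not containing 0 used here it is closed) *)
Definition cone (X : set vec) : set vec :=
  [set y | exists (k : nat) (t : 'I_k -> R) (x : 'I_k -> vec),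
     (forall l, 0 <= t l /\ X (x l)) /\ y = \sum_l t l *: x l].

Definition affdim_ge (X : set vec) (k : nat) : Prop :=
  exists p : 'I_k.+1 -> vec, (forall l, X (p l)) /\
    row_free (\matrix_(l < k) (p (lift ord0 l) - p ord0)).

Definition integral_polytope (D : set vec) : Prop :=
  exists P : seq vec, (forall x, x \in P -> intvec x) /\ D = conv [set x | x \in P].

Definition face_of (D F : set vec) : Prop :=
  exists (l : vec) (c : R), l != 0 /\ (forall x, D x -> dotv l x <= c) /\
    F = [set x | D x /\ dotv l x = c].

Definition facet (D F : set vec) : Prop := face_of D F /\ affdim_ge F n.-1.

(* vertices = extreme points *)
Definition extreme_point (X : set vec) (x : vec) : Prop :=
  X x /\ forall (y z : vec) (t : R), X y -> X z -> 0 < t < 1 ->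
    x = t *: y + (1 - t) *: z -> y = z.

Definition affine_on (phi : vec -> R) (X : set vec) : Prop :=
  exists (a : vec) (b : R), forall x, X x -> phi x = dotv a x + b.

Definition concave_on (phi : vec -> R) (X : set vec) : Prop :=
  forall (x y : vec) (t : R), X x -> X y -> 0 <= t <= 1 ->
    t * phi x + (1 - t) * phi y <= phi (t *: x + (1 - t) *: y).

(* regular decomposition {delta_1..delta_h} of (delta, A), A = {V_1..V_J},
   with concave piecewise linear phi whose domains of linearity are
   exactly the delta_i *)
Definition regular_decomposition (delta : set vec) (J : nat) (V : 'I_J -> vec)
    (h : nat) (deltai : 'I_h -> set vec) (phi : vec -> R) : Prop :=
  (forall i, exists s : seq 'I_J, deltai i = conv [set x | exists j, j \in s /\ x = V j]) /\
  (forall i, affdim_ge (deltai i) n.-1) /\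
  delta = [set x | exists i, deltai i x] /\
  (forall i j, i != j -> ~ affdim_ge (setI (deltai i) (deltai j)) n.-1) /\
  concave_on phi delta /\
  (forall i, affine_on phi (deltai i)) /\
  (forall i j, i != j -> ~ affine_on phi (setU (deltai i) (deltai j))).

End Geometry.

(* Artin--Hasse exponential E(t) = exp(sum_m t^(p^m)/p^m) = sum_m lambda_m t^m
   over Q.  With g(t) = sum_m t^(p^m)/p^m, E is the unique power series with
   E(0) = 1 and E' = g' E, i.e. m lambda_m = sum_{1<=k<=m, k a power of p} lambda_(m-k). *)
Definition is_ppow (p k : nat) : bool := k == (p ^ logn p k)%N.

Fixpoint ah_seq (p m : nat) : seq rat :=
  match m with
  | 0 => [:: 1]
  | m'.+1 => let l := ah_seq p m' in
      rcons l ((m'.+1)%:R^-1 *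
               \sum_(1 <= k < m'.+2 | is_ppow p k) l`_(m'.+1 - k)%N)
  end.

Definition AH_coef (p m : nat) : rat := (ah_seq p m)`_m.

Section Fr.
Variables (R : realType) (n : nat) (K : fieldType) (p : nat) (pi : K).
Variables (J : nat) (V : 'I_J -> 'rV[R]_n).

(* Coefficient of prod_j a_j^(u_j) in F_r(f_S), where f_S = sum over V_j in S
   (S = setT gives F_r(f)).  Polynomials in the indeterminates a_j are
   represented by their coefficient functions on exponent vectors u. *)
Definition Fr_coef (S : set 'rV[R]_n) (r : 'rV[R]_n) (u : 'I_J -> nat) : K :=
  if `[< (forall j, ~ S (V j) -> u j = 0%N) /\ \sum_j (u j)%:R *: V j = r >]
  then (\prod_j ratr (AH_coef p (u j))) * pi ^+ (\sum_j u j)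
  else 0.

(* phi-degree d(phi, F); equals -oo for F = 0 *)
Definition phi_deg (phi : 'rV[R]_n -> R) (F : ('I_J -> nat) -> K) : \bar R :=
  ereal_sup [set x | exists u : 'I_J -> nat,
    F u != 0 /\ x = (\sum_j (u j)%:R * phi (V j))%:E].

Definition m_val (phi : 'rV[R]_n -> R) (r : 'rV[R]_n) : \bar R :=
  ereal_sup [set x | exists u : 'I_J -> R, (forall j, 0 <= u j) /\
    \sum_j u j *: V j = r /\ x = (\sum_j u j * phi (V j))%:E].
End Fr.

(* Let L be the affine function agreeing with phi on delta_i.  Concavity gives
   phi <= L on delta, and since the domains of linearity of phi are exactly the
   delta_k, equality holds only on delta_i: otherwise phi = L at n points in general
   position of some other delta_k, forcing phi to be affine on delta_i U delta_k.
   Extending L homogeneously to the cone, any representation of r by points of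
   delta_i shows m(phi, A; r) >= L(r), while every monomial of F_r(f) - F_r(f_Sigma_i)
   involves some V_j outside Sigma_i, where phi(V_j) <= L(V_j) - g for a uniform gap
   g > 0; so its phi-degree is at most L(r) - g. *)

From HB Require Import structures.
From mathcomp Require Import all_boot all_order all_algebra.
From mathcomp Require Import boolp classical_sets reals constructive_ereal ereal.
From mathcomp Require Import topology normedtype.
From mathcomp Require Import lra ring.
Import Order.TTheory GRing.Theory Num.Theory.
Import numFieldNormedType.Exports.
Local Open Scope classical_set_scope.
Local Open Scope ring_scope.
Set Implicit Arguments. Unset Strict Implicit. Unset Printing Implicit Defensive.

Section Dot.
Variables (R : realType) (n : nat).
Local Notation vec := 'rV[R]_n.

Lemma dotvC (a x : vec) : dotv a x = dotv x a.
Proof. by apply: eq_bigr => k _; rewrite mulrC. Qed.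

Lemma dotv_sum I (r : seq I) (P : pred I) (a : vec) (F : I -> vec) :
  dotv a (\sum_(i <- r | P i) F i) = \sum_(i <- r | P i) dotv a (F i).
Proof.
rewrite /dotv [RHS]exchange_big /=; apply: eq_bigr => k _.
by rewrite summxE mulr_sumr.
Qed.

Lemma dotv0 (a : vec) : dotv a 0 = 0.
Proof. by rewrite /dotv big1 // => k _; rewrite mxE mulr0. Qed.

Lemma dotvD (a x y : vec) : dotv a (x + y) = dotv a x + dotv a y.
Proof. by rewrite /dotv -big_split; apply: eq_bigr => k _; rewrite mxE mulrDr. Qed.

Lemma dotvZ (a x : vec) t : dotv a (t *: x) = t * dotv a x.
Proof. by rewrite /dotv mulr_sumr; apply: eq_bigr => k _; rewrite mxE mulrCA. Qed.

Lemma dotvB (a x y : vec) : dotv a (x - y) = dotv a x - dotv a y.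
Proof. by rewrite dotvD -scaleN1r dotvZ mulN1r. Qed.

Lemma dotv_sumZ k (t : 'I_k -> R) (x : 'I_k -> vec) (a : vec) :
  dotv a (\sum_l t l *: x l) = \sum_l t l * dotv a (x l).
Proof. by rewrite dotv_sum; apply: eq_bigr => l _; rewrite dotvZ. Qed.

Lemma dotvDl (a b x : vec) : dotv (a + b) x = dotv a x + dotv b x.
Proof. by rewrite dotvC dotvD !(dotvC x). Qed.

Lemma dotvZl (a x : vec) t : dotv (t *: a) x = t * dotv a x.
Proof. by rewrite dotvC dotvZ dotvC. Qed.

Lemma dotvBl (a b x : vec) : dotv (a - b) x = dotv a x - dotv b x.
Proof. by rewrite dotvC dotvB !(dotvC x). Qed.

Lemma dotv_mx (e x : vec) : dotv e x = (x *m e^T) 0 0.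
Proof. by rewrite mxE; apply: eq_bigr => j _; rewrite mxE mulrC. Qed.

Lemma unitmx_dotv_eq0 (q : 'I_n -> vec) (e : vec) :
  (\matrix_l q l) \in unitmx -> (forall l, dotv e (q l) = 0) -> e = 0.
Proof.
move=> q_unit e_q.
have qe : (\matrix_l q l) *m e^T = 0.
  apply/matrixP => l j; rewrite (ord1 j) !mxE -[RHS](e_q l) dotv_mx mxE.
  by apply: eq_bigr => k _; rewrite !mxE.
have : e^T = 0 by rewrite -(mulKmx q_unit (e^T)) qe mulmx0.
by move=> /(congr1 trmx); rewrite trmxK trmx0.
Qed.

End Dot.

Section Hull.
Variables (R : realType) (n m : nat) (W : 'I_m -> 'rV[R]_n) (sel : pred 'I_m).

Definition hull (y : 'rV[R]_n) : Prop := exists w : 'I_m -> R,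
  [/\ forall j, 0 <= w j, forall j, ~~ sel j -> w j = 0,
      \sum_j w j = 1 & y = \sum_j w j *: W j].

Lemma hull_vertex j : sel j -> hull (W j).
Proof.
move=> sj; exists (fun k => (k == j)%:R); split.
- by move=> k; rewrite ler0n.
- by move=> k nk; case: eqVneq => // e; move: nk; rewrite e sj.
- by rewrite (bigD1 j) //= eqxx big1 ?addr0 // => k /negbTE ->.
- rewrite (bigD1 j) //= eqxx scale1r big1 ?addr0 // => k /negbTE ->.
  by rewrite scale0r.
Qed.

Lemma hull_comb k (g : 'I_k -> R) (p : 'I_k -> 'rV[R]_n) :
  (forall l, 0 <= g l) -> \sum_l g l = 1 -> (forall l, hull (p l)) ->
  hull (\sum_l g l *: p l).
Proof.
move=> g0 g1 hp; have {hp} [w wP] := choice hp.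
exists (fun j => \sum_l g l * w l j); split.
- move=> j; apply: sumr_ge0 => l _; apply: mulr_ge0 => //.
  by have [] := wP l.
- by move=> j nj; apply: big1 => l _; have [_ -> //] := wP l; rewrite mulr0.
- rewrite exchange_big /= -g1; apply: eq_bigr => l _.
  by have [_ _ w1 _] := wP l; rewrite -mulr_sumr w1 mulr1.
- under eq_bigr => l _ do have [_ _ _ ->] := wP l.
  under eq_bigr do rewrite scaler_sumr.
  rewrite exchange_big /=; apply: eq_bigr => j _.
  by rewrite scaler_suml; apply: eq_bigr => l _; rewrite scalerA.
Qed.

Lemma hull_convex x y t : 0 <= t <= 1 -> hull x -> hull y ->
  hull (t *: x + (1 - t) *: y).
Proof.
move=> /andP[t0 t1] hx hy.
pose g (l : 'I_2) := if l == ord0 then t else 1 - t.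
pose p (l : 'I_2) := if l == ord0 then x else y.
have : hull (\sum_l g l *: p l).
  apply: hull_comb => [l||l]; rewrite /g /p; try by case: ifP.
    by case: ifP => _ //; rewrite subr_ge0.
  by rewrite !big_ord_recr big_ord0 /= add0r addrCA subrr addr0.
by rewrite !big_ord_recr big_ord0 /= add0r.
Qed.

Lemma hull_sel y : hull y -> exists j, sel j.
Proof.
move=> [w [_ w0 w1 _]]; apply: contrapT => nsel.
have : \sum_j w j = 0.
  by apply: big1 => j _; apply: w0; apply/negP => sj; apply: nsel; exists j.
by rewrite w1 => /eqP; rewrite oner_eq0.
Qed.

Lemma conv_hullE : conv [set x | exists j, sel j /\ x = W j] = hull.
Proof.
apply/seteqP; split=> y.
- move=> [k [t [x [tx [t1 ->]]]]]; apply: hull_comb => // l; first by case: (tx l).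
  by have [_ [j [sj ->]]] := tx l; exact: hull_vertex.
- move=> hy; have [j0 sj0] := hull_sel hy; move: hy => [w [w0 wsel w1 ->]].
  exists m, w, (fun j => if sel j then W j else W j0); split; [|split] => //.
  + by move=> j; split => //; case: ifP => sj; [exists j | exists j0].
  + apply: eq_bigr => j _; case: ifP => sj //.
    by rewrite wsel ?sj // !scale0r.
Qed.

End Hull.

Lemma conv_seqE (R : realType) n (P : seq 'rV[R]_n) :
  conv [set x | x \in P] = hull (fun j : 'I_(size P) => nth 0 P j) xpredT.
Proof.
rewrite -conv_hullE; congr conv; apply/seteqP; split => x /=.
  move=> xP; have ix : (index x P < size P)%N by rewrite index_mem.
  by exists (Ordinal ix); split => //=; rewrite nth_index.
by move=> [j [_ ->]]; exact: mem_nth.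
Qed.

Lemma row_free_ker0 (F : fieldType) m k (A : 'M[F]_(m, k)) :
  (forall u : 'rV_m, u *m A = 0 -> u = 0) -> row_free A.
Proof.
move=> H; rewrite -kermx_eq0; apply/eqP/row_matrixP => i; rewrite row0.
by apply: H; apply/sub_kermxP; exact: row_sub.
Qed.

Lemma mulmx_rows (F : nzRingType) m k (u : 'rV[F]_m) (p : 'I_m -> 'rV[F]_k) :
  u *m (\matrix_l p l) = \sum_l u 0 l *: p l.
Proof. by rewrite mulmx_sum_row; apply: eq_bigr => l _; rewrite rowK. Qed.

Lemma vandermonde_nat_unit (R : numFieldType) n (g : 'I_n -> nat) : injective g ->
  (\matrix_(a < n, k < n) ((g a)%:R ^+ k : R)) \in unitmx.
Proof.
move=> g_inj.
have -> : (\matrix_(a < n, k < n) ((g a)%:R ^+ k : R)) =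
          (Vandermonde n (\row_a ((g a)%:R : R)))^T.
  by apply/matrixP => x y; rewrite !mxE.
rewrite unitmxE det_tr det_Vandermonde unitfE.
apply/prodf_neq0 => x _; apply/prodf_neq0 => y xy.
rewrite !mxE subr_eq0 eqr_nat; apply/negP => /eqP /g_inj e.
by move: xy; rewrite e ltnn.
Qed.

Section Hyperplane.
Variables (R : realType) (n' : nat).
Local Notation n := n'.+1.
Local Notation vec := 'rV[R]_n.
Variables (lv : vec) (c : R) (p : 'I_n -> vec).
Hypotheses (c_neq0 : c != 0) (p_hyp : forall l, dotv lv (p l) = c).

Lemma affine_agree_hyperplane (q : 'I_n -> vec) (a a' : vec) (b b' : R) :
  (\matrix_l q l) \in unitmx -> (forall l, dotv lv (q l) = c) ->
  (forall l, dotv a (q l) + b = dotv a' (q l) + b') ->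
  forall z, dotv lv z = c -> dotv a z + b = dotv a' z + b'.
Proof.
move=> q_unit q_hyp q_agree.
(* on the hyperplane the difference of the two affine maps is the linear form e *)
pose e := (a - a') + ((b - b') / c) *: lv.
have eE z : dotv lv z = c -> dotv e z = (dotv a z + b) - (dotv a' z + b').
  by move=> z_hyp; rewrite dotvDl dotvBl dotvZl z_hyp mulfVK //; ring.
have e0 : e = 0.
  by apply: (unitmx_dotv_eq0 q_unit) => l; rewrite eE // q_agree subrr.
by move=> z /eE; rewrite e0 dotvC dotv0 => /eqP; rewrite eq_sym subr_eq0 => /eqP.
Qed.

Lemma sum_coef_hyperplane (b : 'I_n -> R) :
  dotv lv (\sum_l b l *: p l) = c * \sum_l b l.
Proof. by rewrite dotv_sumZ mulr_sumr; apply: eq_bigr => l _; rewrite p_hyp mulrC. Qed.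

Lemma affine_frame_unit :
  row_free (\matrix_(l < n') (p (lift ord0 l) - p ord0)) -> (\matrix_l p l) \in unitmx.
Proof.
move=> p_free; rewrite -row_free_unit; apply: row_free_ker0 => u.
rewrite mulmx_rows => u_p.
have u_sum : \sum_l u 0 l = 0.
  by have /eqP := congr1 (dotv lv) u_p; rewrite sum_coef_hyperplane dotv0 mulf_eq0
    (negbTE c_neq0) => /eqP.
pose v : 'rV[R]_n' := \row_l u 0 (lift ord0 l).
have v0 : v = 0.
  apply/eqP; rewrite -(mulmx_free_eq0 _ p_free) mulmx_rows; apply/eqP.
  have : \sum_l u 0 l *: (p l - p ord0) = 0.
    under eq_bigr do rewrite scalerBr.
    by rewrite sumrB u_p -scaler_suml u_sum scale0r subrr.
  rewrite big_ord_recl subrr scaler0 add0r => u_diff; rewrite -[RHS]u_diff.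
  by apply: eq_bigr => l _; rewrite mxE.
have ul l : u 0 (lift ord0 l) = 0.
  by have := congr1 (fun w : 'rV_n' => w 0 l) v0; rewrite !mxE.
apply/rowP => l; rewrite mxE.
case: (unliftP ord0 l) => [j ->|->]; first exact: ul.
by move: u_sum; rewrite big_ord_recl big1 ?addr0 // => j _; exact: ul.
Qed.

Lemma shifted_frame_unit (al : vec) (s : R) : (\matrix_l p l) \in unitmx ->
  dotv lv al = c -> s != 0 ->
  (\matrix_k (if k == ord0 then al else s *: (p k - p ord0))) \in unitmx.
Proof.
move=> p_unit al_hyp s_neq0; rewrite -row_free_unit; apply: row_free_ker0 => u.
rewrite mulmx_rows big_ord_recl /= => u_comb.
set d := fun k : 'I_n => u 0 k * s * (k != ord0)%:R.
have {}u_comb : u 0 ord0 *: al + \sum_k d k *: (p k - p ord0) = 0.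
  rewrite -[RHS]u_comb big_ord_recl /d /= mulr0 scale0r add0r; congr (_ + _).
  by apply: eq_bigr => k _; rewrite scalerA mulr1.
have u0 : u 0 ord0 = 0.
  have /eqP := congr1 (dotv lv) u_comb; rewrite dotvD dotvZ dotv_sum dotv0 al_hyp.
  under eq_bigr do rewrite dotvZ dotvB !p_hyp subrr mulr0.
  by rewrite big1 // addr0 mulf_eq0 (negbTE c_neq0) orbF => /eqP.
rewrite u0 scale0r add0r in u_comb.
pose v : 'rV[R]_n := \row_k (d k - (k == ord0)%:R * \sum_k' d k').
have v0 : v = 0.
  have : v *m (\matrix_l p l) = 0.
    rewrite mulmx_rows -[RHS]u_comb.
    under eq_bigr do rewrite mxE scalerBl.
    rewrite sumrB; under [X in _ - X = _]eq_bigr do rewrite -scalerA.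
    rewrite [X in _ - X = _]big_ord_recl /= scale1r.
    rewrite [X in _ - (_ + X) = _]big1 ?addr0; last by move=> k _; rewrite scale0r.
    by under [RHS]eq_bigr do rewrite scalerBr; rewrite sumrB -scaler_suml.
  by move=> vp; rewrite -(mulmxK p_unit v) vp mul0mx.
apply/rowP => k; rewrite mxE.
have [->|nk] := eqVneq k ord0; first exact: u0.
have := congr1 (fun w : 'rV_n => w 0 k) v0.
rewrite !mxE /d nk (negbTE nk) mul0r subr0 mulr1 => /eqP.
by rewrite mulf_eq0 (negbTE s_neq0) orbF => /eqP.
Qed.

Definition moment_dir (r : nat) : vec := \sum_(k < n) ((r%:R : R) ^+ k) *: (p k - p ord0).

Lemma moment_dir_hyperplane r : dotv lv (moment_dir r) = 0.
Proof.
by rewrite dotv_sum big1 // => k _; rewrite dotvZ dotvB !p_hyp subrr mulr0.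
Qed.

(* The rows factor as a Vandermonde matrix times the frame of [shifted_frame_unit]. *)
Lemma moment_points_unit (al : vec) (s : R) (g : 'I_n -> nat) :
  (\matrix_l p l) \in unitmx -> dotv lv al = c -> s != 0 -> injective g ->
  (\matrix_k (al + s *: moment_dir (g k))) \in unitmx.
Proof.
move=> p_unit al_hyp s_neq0 g_inj.
have -> : \matrix_k (al + s *: moment_dir (g k)) =
    (\matrix_(a < n, k < n) ((g a)%:R ^+ k : R)) *m
    \matrix_k (if k == ord0 then al else s *: (p k - p ord0)).
  apply/row_matrixP => a; rewrite rowK row_mul mulmx_sum_row.
  rewrite [RHS]big_ord_recl !rowK /= !mxE expr0 scale1r; congr (_ + _).
  rewrite /moment_dir scaler_sumr big_ord_recl subrr !scaler0 add0r.
  by apply: eq_bigr => k _; rewrite rowK !mxE /= !scalerA mulrC.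
rewrite unitmx_mul vandermonde_nat_unit //.
exact: shifted_frame_unit.
Qed.

Section Barycenter.
Variables (m : nat) (W : 'I_m -> vec) (sel : pred 'I_m).
Hypotheses (p_unit : (\matrix_l p l) \in unitmx) (p_hull : forall l, hull W sel (p l)).

Definition barycenter : vec := \sum_l n%:R^-1 *: p l.

Lemma barycenter_hyperplane : dotv lv barycenter = c.
Proof.
rewrite sum_coef_hyperplane sumr_const card_ord -[_ *+ n]mulr_natr.
by rewrite mulVf ?mulr1 ?pnatr_eq0.
Qed.

Lemma barycenter_interior z : dotv lv z = c -> exists2 t0, 0 < t0 <= 1 &
  forall t, 0 <= t <= t0 -> hull W sel ((1 - t) *: barycenter + t *: z).
Proof.
move=> z_hyp; pose b l := (z *m invmx (\matrix_l p l)) 0 l.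
have zE : z = \sum_l b l *: p l by rewrite -mulmx_rows mulmxKV.
have Sb : \sum_l b l = 1.
  by apply: (mulfI c_neq0); rewrite -sum_coef_hyperplane -zE z_hyp mulr1.
set S := \sum_l `|b l|.
have S0 : 0 <= S by apply: sumr_ge0 => l _.
have nS0 : 0 < 1 + n%:R * S by apply: ltr_pwDl => //; apply: mulr_ge0.
exists (1 + n%:R * S)^-1.
  by rewrite invr_gt0 nS0 invf_le1 // lerDl mulr_ge0.
move=> t /andP[t0 tt0].
have -> : (1 - t) *: barycenter + t *: z = \sum_l ((1 - t) / n%:R + t * b l) *: p l.
  by rewrite zE !scaler_sumr -big_split /=; apply: eq_bigr => l _;
    rewrite !scalerA scalerDl.
apply: hull_comb => // [l|].
- have N0 : 0 < n%:R :> R by rewrite ltr0n.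
  have tS : t * (1 + n%:R * S) <= 1 by rewrite -ler_pdivlMr // div1r.
  have bS : `|b l| <= S by rewrite /S (bigD1 l) //= lerDl sumr_ge0.
  have tb : t * `|b l| * n%:R <= 1 - t.
    apply: le_trans (_ : t * S * n%:R <= _); first by rewrite ler_pM2r // ler_wpM2l.
    have -> : t * S * n%:R = t * (1 + n%:R * S) - t by ring.
    lra.
  have : - (t * `|b l|) <= t * b l.
    by rewrite -mulrN ler_wpM2l // lerNl -normrN ler_norm.
  have : t * `|b l| <= (1 - t) / n%:R by rewrite ler_pdivlMr.
  by move: (t * `|b l|) (t * b l) ((1 - t) / n%:R) => x y q; lra.
- rewrite big_split /= -[\sum_(l < n) t * _]mulr_sumr Sb mulr1.
  rewrite -[\sum_(l < n) _ / _]mulr_sumr sumr_const.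
  by rewrite card_ord -[_ *+ n]mulr_natr mulVf ?pnatr_eq0 // mulr1 subrK.
Qed.

End Barycenter.
End Hyperplane.

Lemma finite_pos_lbound (R : realFieldType) k (f : 'I_k -> R) :
  (forall s, 0 < f s) -> exists2 g, 0 < g <= 1 & forall s, g <= f s.
Proof.
move=> f_gt0; pose S := \sum_s (f s)^-1.
have S_ge0 : 0 <= S by apply: sumr_ge0 => s _; rewrite invr_ge0 ltW.
have S1_gt0 : 0 < 1 + S by lra.
exists (1 + S)^-1; first by rewrite invr_gt0 S1_gt0 invf_le1 //; lra.
move=> s; rewrite -[leRHS](invrK (f s)) lef_pV2 ?posrE ?invr_gt0 //.
rewrite /S (bigD1 s) //= addrCA lerDl; apply: addr_ge0 => //.
by apply: sumr_ge0 => s' _; rewrite invr_ge0 ltW.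
Qed.

Lemma pigeonhole_fiber (N h n : nat) (f : 'I_N -> 'I_h) : (h * n < N)%N ->
  exists k (g : 'I_n.+1 -> 'I_N), injective g /\ forall a, f (g a) = k.
Proof.
move=> hN; have [k Hk] : exists k, (n < #|[pred s | f s == k]|)%N.
  apply: contrapT => nk; move: hN; apply/negP; rewrite -leqNgt.
  rewrite -{1}(card_ord N) -sum1_card (partition_big f xpredT) //=.
  apply: (@leq_trans (\sum_(k < h) n)); last by rewrite sum_nat_const card_ord.
  apply: leq_sum => k _; rewrite sum1_card leqNgt.
  by apply/negP => Hk; apply: nk; exists k.
exists k, (fun a => enum_val (widen_ord Hk a)); split.
  by move=> x y /enum_val_inj /(congr1 val) /= e; exact: val_inj.
by move=> a; have := enum_valP (widen_ord Hk a); rewrite inE => /eqP.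
Qed.

Section HullClosed.
Variables (R : realType) (n m : nat) (W : 'I_m -> 'rV[R]_n) (sel : pred 'I_m).

Lemma continuous_sum (V : normedModType R) (T : topologicalType) I (r : seq I)
    (P : pred I) (f : I -> T -> V) :
  (forall i, continuous (f i)) -> continuous (fun x => \sum_(i <- r | P i) f i x).
Proof.
move=> f_cont; elim: r => [|i r IH].
  by under eq_fun do rewrite big_nil; exact: cst_continuous.
under eq_fun do rewrite big_cons.
by case: (P i) => // x; apply: continuousD; [exact: f_cont | exact: IH].
Qed.

Definition simplex : set 'rV[R]_m := [set w | (forall j, 0 <= w 0 j) /\
  (forall j, ~~ sel j -> w 0 j = 0) /\ \sum_j w 0 j = 1].

Lemma hull_simplexE : hull W sel = (fun w => \sum_j w 0 j *: W j) @` simplex.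
Proof.
apply/seteqP; split=> x.
  move=> [w [w0 wsel w1 ->]]; exists (\row_j w j).
    by split; [|split] => [j|j|]; rewrite ?mxE //; [exact: wsel|];
       under eq_bigr do rewrite mxE.
  by apply: eq_bigr => j _; rewrite mxE.
by move=> [w [w0 [wsel w1]] <-]; exists (fun j => w 0 j).
Qed.

Lemma closed_simplex : closed simplex.
Proof.
pose coord j (w : 'rV[R]_m) : R^o := w 0 j.
have coord_cont j : continuous (coord j) by move=> w; exact: coord_continuous.
have -> : simplex = \bigcap_(j in setT) (coord j @^-1` [set x | 0 <= x])
   `&` (\bigcap_(j in [set j | ~~ sel j]) (coord j @^-1` [set x | x = 0])
   `&` ((fun w => \sum_j coord j w) @^-1` [set x | x = 1])).
  apply/seteqP; split => w /=.
    by move=> [w0 [wsel w1]]; split; [move=> j _; exact: w0|split => // j; exact: wsel].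
  by move=> [w0 [wsel w1]]; split; [move=> j; exact: w0|split => // j; exact: wsel].
apply: closedI; [|apply: closedI].
- apply: closed_bigI => j _; apply: preimage_closed; last exact: closed_ge.
  by move=> w _; exact: coord_cont.
- apply: closed_bigI => j _; apply: preimage_closed; last exact: closed_eq.
  by move=> w _; exact: coord_cont.
- apply: preimage_closed; last exact: closed_eq.
  by move=> w _; exact: (@continuous_sum R^o _ _ (index_enum _) xpredT _ coord_cont).
Qed.

Lemma closed_hull : closed (hull W sel).
Proof.
rewrite hull_simplexE; apply: compact_closed; first exact: norm_hausdorff.
apply: continuous_compact.
  apply: continuous_subspaceT; apply: continuous_sum => j w.
  by apply: continuousZr_tmp; exact: coord_continuous.
have cube := @rV_compact R m (fun=> `[(0 : R), 1]%classic) (fun=> @segment_compact R 0 1).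
apply: subclosed_compact closed_simplex cube _.
move=> w [w0 [_ w1]] j /=; rewrite in_itv /= w0 /= -w1.
by rewrite (bigD1 j) //= lerDl sumr_ge0.
Qed.

Lemma not_hull_ball x : ~ hull W sel x ->
  exists2 e, 0 < e & forall z, `|x - z| < e -> ~ hull W sel z.
Proof.
move=> nx; have : nbhs x (~` hull W sel).
  by apply: open_nbhs_nbhs; split => //; exact: closed_openC closed_hull.
move=> /nbhs_ballP [e e0 He]; exists e => // z xz; apply: He.
by rewrite -ball_normE.
Qed.

End HullClosed.

Section AffinePiece.
Variables (R : realType) (n' : nat).
Local Notation n := n'.+1.
Local Notation vec := 'rV[R]_n.
Variables (lv : vec) (c : R) (p : 'I_n -> vec) (m : nat) (W : 'I_m -> vec)
  (sel : pred 'I_m) (delta : set vec) (phi : vec -> R) (a : vec) (b : R).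
Hypotheses (c_neq0 : c != 0) (p_hyp : forall l, dotv lv (p l) = c)
  (p_unit : (\matrix_l p l) \in unitmx) (p_hull : forall l, hull W sel (p l))
  (delta_hyp : forall x, delta x -> dotv lv x = c)
  (delta_convex : forall x y t, delta x -> delta y -> 0 <= t <= 1 ->
     delta (t *: x + (1 - t) *: y))
  (hull_delta : forall x, hull W sel x -> delta x)
  (phi_piece : forall x, hull W sel x -> phi x = dotv a x + b)
  (phi_concave : concave_on phi delta).

(* Concavity along the segment from x to the barycenter, an interior point of the piece. *)
Lemma concave_le_affine_piece x : delta x -> phi x <= dotv a x + b.
Proof.
move=> dx; have [t /andP[t_gt0 t_le1] Ht] :=
  barycenter_interior c_neq0 p_hyp p_unit p_hull (delta_hyp dx).
set y := barycenter p in Ht.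
have hy : hull W sel y.
  by have := Ht 0; rewrite subr0 scale1r scale0r addr0; apply; rewrite lexx ltW.
have hyx : hull W sel ((1 - t) *: y + t *: x) by apply: Ht; rewrite lexx ltW.
have := phi_concave dx (hull_delta hy) (_ : 0 <= t <= 1).
rewrite (ltW t_gt0) t_le1 [t *: x + _]addrC (phi_piece hyx) (phi_piece hy).
rewrite dotvD !dotvZ => /(_ isT) H.
by rewrite -(ler_pM2l t_gt0); lra.
Qed.

Lemma affine_piece_segment v x s : hull W sel v -> delta x ->
  phi x = dotv a x + b -> 0 <= s <= 1 ->
  phi (s *: v + (1 - s) *: x) = dotv a (s *: v + (1 - s) *: x) + b.
Proof.
move=> hv dx phix s01; have dsx := delta_convex (hull_delta hv) dx s01.
apply/eqP; rewrite eq_le concave_le_affine_piece //=.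
have := phi_concave (hull_delta hv) dx s01.
by rewrite (phi_piece hv) phix !(dotvD, dotvZ); lra.
Qed.

(* w_r = s v_r + (1 - s) x with v_r = y + t (moment_dir p r) on a moment curve through
   the barycenter y: any n of them are linearly independent. *)
Lemma hull_segments_general_position x N e : dotv lv x = c -> 0 < e ->
  exists w : 'I_N -> vec,
  [/\ forall r, exists2 v, hull W sel v &
        exists2 s, 0 <= s <= 1 & w r = s *: v + (1 - s) *: x,
      forall r, `|x - w r| < e &
      forall g : 'I_n -> 'I_N, injective g -> (\matrix_k w (g k)) \in unitmx].
Proof.
move=> x_hyp e_gt0; set y := barycenter p; pose d (r : 'I_N) := moment_dir p r.
have d_hyp r : dotv lv (y + d r) = c.
  by rewrite dotvD (barycenter_hyperplane p_hyp) (moment_dir_hyperplane p_hyp) addr0.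
have t_ex r : exists t : R, 0 < t /\ forall t', 0 <= t' <= t ->
    hull W sel ((1 - t') *: y + t' *: (y + d r)).
  have [t /andP[t_gt0 _] Ht] := barycenter_interior c_neq0 p_hyp p_unit p_hull (d_hyp r).
  by exists t.
have [tr trP] := choice t_ex.
have [t /andP[t_gt0 t_le1] t_le] := finite_pos_lbound (fun r => (trP r).1).
pose v r := (1 - t) *: y + t *: (y + d r).
have hv r : hull W sel (v r) by apply: (trP r).2; rewrite ltW // t_le.
pose ff r := e / (2 * (1 + `|x - v r|)).
have ff_gt0 r : 0 < ff r by rewrite divr_gt0 // mulr_gt0 // ltr_pwDl.
have [s /andP[s_gt0 s_le1] s_le] := finite_pos_lbound ff_gt0.
exists (fun r => s *: v r + (1 - s) *: x); split.
- by move=> r; exists (v r) => //; exists s => //; rewrite (ltW s_gt0).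
- move=> r; have -> : x - (s *: v r + (1 - s) *: x) = s *: (x - v r).
    rewrite scalerBr scalerBl scale1r opprD opprB addrCA addrA addrC.
    by rewrite [- (s *: v r) + x]addrC addrA subrK.
  rewrite normrZ ger0_norm ?(ltW s_gt0) //.
  apply: le_lt_trans (ler_wpM2r (normr_ge0 _) (s_le r)) _.
  rewrite /ff mulrAC ltr_pdivrMr ?mulr_gt0 ?ltr_pwDl // ltr_pM2l //.
  by have := normr_ge0 (x - v r); lra.
- move=> g g_inj; pose al := s *: y + (1 - s) *: x.
  have wE r : s *: v r + (1 - s) *: x = al + (s * t) *: d r.
    have vE : v r = y + t *: d r.
      by rewrite /v [t *: (_ + _)]scalerDr addrA -scalerDl subrK scale1r.
    by rewrite vE scalerDr scalerA /al addrAC.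
  under eq_mx do rewrite wE.
  apply: (moment_points_unit c_neq0 p_hyp p_unit); last by move=> ? ? /val_inj /g_inj.
    by rewrite /al dotvD !dotvZ (barycenter_hyperplane p_hyp) x_hyp; ring.
  by rewrite mulf_neq0 // gt_eqF.
Qed.

Variables (h : nat) (D : 'I_h -> set vec) (i : 'I_h).
Hypotheses (D_cover : forall x, delta x -> exists k, D k x)
  (D_delta : forall k x, D k x -> delta x) (D_i : D i = hull W sel)
  (D_affine : forall k, affine_on phi (D k))
  (D_nonaffine : forall k, k != i -> ~ affine_on phi (D i `|` D k)).

(* Otherwise n points in general position near x, off the piece but where phi still equals
   the affine function, would lie in one other piece, on which phi would then be that
   same affine function. *)
Lemma affine_equality_in_piece x : delta x -> phi x = dotv a x + b -> hull W sel x.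
Proof.
move=> dx phix; apply: contrapT => nx; have [e e_gt0 near_nx] := not_hull_ball nx.
have [w [w_seg w_near w_unit]] :=
  hull_segments_general_position (h * n').+1 (delta_hyp dx) e_gt0.
have w_delta r : delta (w r).
  by have [v hv [s s01 ->]] := w_seg r; exact: delta_convex (hull_delta hv) dx s01.
have w_phi r : phi (w r) = dotv a (w r) + b.
  by have [v hv [s s01 ->]] := w_seg r; exact: affine_piece_segment.
have [kk kkP] := choice (fun r => D_cover (w_delta r)).
have kk_i r : kk r != i.
  by apply/eqP => kki; apply: (near_nx _ (w_near r)); rewrite -D_i -kki.
have [k [g [g_inj gk]]] := pigeonhole_fiber kk (ltnSn _).
have [ak [bk phi_Dk]] := D_affine k.
have w_agree l : dotv a (w (g l)) + b = dotv ak (w (g l)) + bk.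
  by rewrite -w_phi; apply: phi_Dk; rewrite -(gk l).
have agree := affine_agree_hyperplane c_neq0 (w_unit g g_inj)
  (fun l => delta_hyp (w_delta _)) w_agree.
apply: (D_nonaffine (k := k)); first by rewrite -(gk ord0).
exists a, b => z [zi|zk]; first by apply: phi_piece; rewrite -D_i.
by rewrite phi_Dk // agree // (delta_hyp (D_delta zk)).
Qed.

End AffinePiece.

Lemma finite_gap (R : realFieldType) k (P : 'I_k -> Prop) (f : 'I_k -> R) :
  (forall j, ~ P j -> 0 < f j) -> exists2 g, 0 < g & forall j, ~ P j -> g <= f j.
Proof.
move=> f_gt0; pose f' j := if pselect (P j) then 1 else f j.
have f'_gt0 j : 0 < f' j by rewrite /f'; case: pselect => // nPj; exact: f_gt0.
have [g /andP[g_gt0 _] g_le] := finite_pos_lbound f'_gt0.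
by exists g => // j nPj; have := g_le j; rewrite /f'; case: pselect.
Qed.

Section ConeWeights.
Variables (R : realType) (n : nat).
Local Notation vec := 'rV[R]_n.

Lemma cone_self (X : set vec) x : X x -> cone X x.
Proof. by move=> Xx; exists 1%N, (fun=> 1), (fun=> x); rewrite big_ord1 scale1r. Qed.

Lemma cone_hull_weights m (W : 'I_m -> vec) (sel : pred 'I_m) r :
  cone (hull W sel) r -> exists u : 'I_m -> R,
  [/\ forall j, 0 <= u j, forall j, ~~ sel j -> u j = 0 & r = \sum_j u j *: W j].
Proof.
move=> [k [t [x [tx ->]]]].
have [w wP] := choice (fun l => (tx l).2).
exists (fun j => \sum_l t l * w l j); split.
- move=> j; apply: sumr_ge0 => l _; apply: mulr_ge0; first by case: (tx l).
  by have [] := wP l.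
- by move=> j nj; apply: big1 => l _; have [_ -> //] := wP l; rewrite mulr0.
- under eq_bigr => l _ do have [_ _ _ ->] := wP l.
  under eq_bigr do rewrite scaler_sumr.
  rewrite exchange_big /=; apply: eq_bigr => j _.
  by rewrite scaler_suml; apply: eq_bigr => l _; rewrite scalerA.
Qed.

(* [dotv lv r / c] is the paper's w(r), used to extend an affine map homogeneously. *)
Lemma sum_affine_weights m (u : 'I_m -> R) (W : 'I_m -> vec) (a lv : vec) (b c : R) :
  c != 0 -> (forall j, u j != 0 -> dotv lv (W j) = c) ->
  \sum_j u j * (dotv a (W j) + b) =
  dotv a (\sum_j u j *: W j) + b * (dotv lv (\sum_j u j *: W j) / c).
Proof.
move=> c_neq0 W_hyp; rewrite !dotv_sumZ.
have -> : \sum_j u j * dotv lv (W j) = (\sum_j u j) * c.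
  rewrite mulr_suml; apply: eq_bigr => j _.
  by have [->|/W_hyp ->] := eqVneq (u j) 0; rewrite ?mul0r.
by rewrite mulfK // mulr_sumr -big_split /=; apply: eq_bigr => j _; ring.
Qed.

End ConeWeights.

Section Degrees.
Variables (R : realType) (n : nat) (J : nat) (V : 'I_J -> 'rV[R]_n) (phi : 'rV[R]_n -> R).
Variables (a lv : 'rV[R]_n) (b c : R).
Hypotheses (c_neq0 : c != 0) (V_hyp : forall j, dotv lv (V j) = c).

Lemma m_val_ge_cone_hull (sel : pred 'I_J) r :
  (forall j, sel j -> phi (V j) = dotv a (V j) + b) -> cone (hull V sel) r ->
  ((dotv a r + b * (dotv lv r / c))%:E <= m_val V phi r)%E.
Proof.
move=> phi_sel /cone_hull_weights [u [u_ge0 u_sel rE]].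
apply: ereal_sup_ubound; exists u; split => //; split; first by rewrite rE.
rewrite rE -sum_affine_weights //; congr EFin; apply: eq_bigr => j _.
by case: (boolP (sel j)) => [/phi_sel -> | /u_sel ->] //; rewrite !mul0r.
Qed.

(* A monomial of F_r(f) - F_r(f_S) must involve some V_j outside S, each of which costs at
   least g against the affine bound. *)
Lemma phi_deg_Fr_diff_le (K : fieldType) (p : nat) (pi : K) (S : set 'rV[R]_n) r g :
  0 <= g -> (forall j, phi (V j) <= dotv a (V j) + b) ->
  (forall j, ~ S (V j) -> phi (V j) + g <= dotv a (V j) + b) ->
  (phi_deg V phi (fun u => (Fr_coef p pi V setT r u - Fr_coef p pi V S r u)%R) <=
   (dotv a r + b * (dotv lv r / c) - g)%:E)%E.
Proof.
move=> g_ge0 phi_le phi_gap; apply: ge_ereal_sup => _ [u [+ ->]].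
rewrite lee_fin /Fr_coef.
case: asboolP => [[_ rE]|nT]; last first.
  case: asboolP => [[_ rE]|_]; last by rewrite subrr eqxx.
  by exfalso; apply: nT; split => // j /(_ I).
case: asboolP => [_|nS _]; first by rewrite subrr eqxx.
have [j0 [nSj0 uj0]] : exists j0, ~ S (V j0) /\ u j0 <> 0%N.
  apply: contrapT => nex; apply: nS; split => // j nSj.
  by apply: contrapT => uj; apply: nex; exists j.
rewrite -rE -sum_affine_weights // (bigD1 j0) //= [X in _ <= X - g](bigD1 j0) //=.
have : (u j0)%:R * phi (V j0) + g <= (u j0)%:R * (dotv a (V j0) + b).
  have u_ge1 : 1 <= (u j0)%:R :> R by rewrite ler1n lt0n; apply/eqP.
  have := phi_gap _ nSj0; have := phi_le j0.
  move: (phi (V j0)) (dotv a (V j0) + b) ((u j0)%:R : R) u_ge1 => x y k k1 xy xgy.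
  by nra.
have : \sum_(j | j != j0) (u j)%:R * phi (V j) <=
       \sum_(j | j != j0) (u j)%:R * (dotv a (V j) + b).
  by apply: ler_sum => j _; rewrite ler_wpM2l.
lra.
Qed.

End Degrees.

Lemma regular_decomposition_affine_piece (R : realType) (n' : nat)
    (delta : set 'rV[R]_n'.+1) (J : nat) (V : 'I_J -> 'rV[R]_n'.+1) (h : nat)
    (D : 'I_h -> set 'rV[R]_n'.+1) (phi : 'rV[R]_n'.+1 -> R) (i : 'I_h)
    (lv : 'rV[R]_n'.+1) (c : R) :
  c != 0 -> (forall x, delta x -> dotv lv x = c) ->
  (forall x y t, delta x -> delta y -> 0 <= t <= 1 -> delta (t *: x + (1 - t) *: y)) ->
  regular_decomposition delta V D phi ->
  exists sel a b, [/\ D i = hull V sel, forall x, D i x -> phi x = dotv a x + b,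
    forall x, delta x -> phi x <= dotv a x + b &
    forall x, delta x -> phi x = dotv a x + b -> D i x].
Proof.
move=> c_neq0 delta_hyp delta_convex.
move=> [D_hull [D_dim [deltaE [_ [phi_concave [D_aff D_nonaff]]]]]].
have [s Di] := D_hull i; rewrite (conv_hullE V (fun j => j \in s)) in Di.
have D_delta k x : D k x -> delta x by move=> Dx; rewrite deltaE; exists k.
have D_cover x : delta x -> exists k, D k x by rewrite {1}deltaE.
have [q [q_D q_free]] := D_dim i.
have q_hull l : hull V (fun j => j \in s) (q l) by rewrite -Di.
have q_hyp l : dotv lv (q l) = c by apply/delta_hyp/(D_delta i).
have q_unit := affine_frame_unit c_neq0 q_hyp q_free.
have [a [b phi_Di]] := D_aff i.
have hull_delta x : hull V (fun j => j \in s) x -> delta x by rewrite -Di; exact: D_delta.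
have phi_hull x : hull V (fun j => j \in s) x -> phi x = dotv a x + b.
  by rewrite -Di; exact: phi_Di.
exists (fun j => j \in s), a, b; split => // [x|x dx phix].
  exact: (concave_le_affine_piece c_neq0 q_hyp q_unit q_hull delta_hyp).
rewrite Di; apply: (affine_equality_in_piece c_neq0 q_hyp q_unit q_hull delta_hyp
  delta_convex hull_delta phi_hull phi_concave D_cover D_delta Di D_aff) => // k ki.
by apply: D_nonaff; rewrite eq_sym.
Qed.

Lemma facet_off_origin_hyperplane (R : realType) n (Delta delta : set 'rV[R]_n)
    (P : seq 'rV[R]_n) :
  Delta = conv [set x | x \in P] -> Delta 0 -> facet Delta delta -> ~ delta 0 ->
  exists lv c, [/\ c != 0, forall x, delta x -> dotv lv x = c &
    forall x y t, delta x -> delta y -> 0 <= t <= 1 -> delta (t *: x + (1 - t) *: y)].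
Proof.
move=> DeltaE Delta0 [[lv [c [_ [_ deltaE]]]] _] delta_n0; exists lv, c; split.
- by apply/eqP => c0; apply: delta_n0; rewrite deltaE; split; rewrite ?dotv0.
- by rewrite deltaE => x [].
- move=> x y t; rewrite deltaE DeltaE conv_seqE => -[Dx x_hyp] [Dy y_hyp] t01.
  by split; [exact: hull_convex | rewrite dotvD !dotvZ x_hyp y_hyp; ring].
Qed.

Theorem mainTheorem4 (R : realType) (n : nat) (p : nat) (K : fieldType) (pi : K)
    (Delta delta : set 'rV[R]_n) (J : nat) (V : 'I_J -> 'rV[R]_n)
    (h : nat) (deltai : 'I_h -> set 'rV[R]_n) (phi : 'rV[R]_n -> R)
    (i : 'I_h) (r : 'rV[R]_n) :
  prime p -> [pchar K] =i pred0 -> pi != 0 ->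
  integral_polytope Delta -> affdim_ge Delta n -> Delta 0 ->
  facet Delta delta -> ~ delta 0 ->
  (forall F, facet Delta F -> ~ F 0 -> F = delta) ->
  Delta = conv (delta `|` [set 0]) ->
  injective V -> (forall j, delta (V j) /\ intvec (V j)) ->
  (forall x, extreme_point delta x -> exists j, V j = x) ->
  regular_decomposition delta V deltai phi ->
  intvec r -> cone (deltai i) r ->
  (phi_deg V phi (fun u => (Fr_coef p pi V setT r u - Fr_coef p pi V (cone (deltai i)) r u)%R)
     < m_val V phi r)%E.
Proof.
move=> _ _ _ [P [_ DeltaE]] _ Delta0 facet delta_n0 _ _ _ V_delta _ regular _ r_cone.
case: n => [|n'] in P Delta delta V deltai phi r DeltaE Delta0 facet delta_n0 V_delta
  regular r_cone *.
  by case: facet => [[lv [_ [lv_neq0 _]]] _]; move: lv_neq0; rewrite thinmx0 eqxx.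
have [lv [c [c_neq0 delta_hyp delta_convex]]] :=
  facet_off_origin_hyperplane DeltaE Delta0 facet delta_n0.
have [sel [a [b [Di phi_Di phi_le phi_eq]]]] :=
  regular_decomposition_affine_piece i c_neq0 delta_hyp delta_convex regular.
have V_hyp j : dotv lv (V j) = c := delta_hyp _ (V_delta j).1.
have phi_V_le j : phi (V j) <= dotv a (V j) + b := phi_le _ (V_delta j).1.
have [g g_gt0 g_le] : exists2 g, 0 < g &
    forall j, ~ cone (deltai i) (V j) -> g <= dotv a (V j) + b - phi (V j).
  apply: finite_gap => j nVj; rewrite subr_gt0 lt_def phi_V_le andbT.
  apply: contra_notN nVj => /eqP phiV; apply: cone_self.
  by apply: phi_eq; [exact: (V_delta j).1 | rewrite phiV].
have phi_sel j : sel j -> phi (V j) = dotv a (V j) + b.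
  by move=> /(hull_vertex V); rewrite -Di; exact: phi_Di.
have r_hull : cone (hull V sel) r by rewrite -Di.
apply: le_lt_trans (phi_deg_Fr_diff_le c_neq0 V_hyp p pi r (ltW g_gt0) phi_V_le _) _.
  by move=> j /g_le; lra.
apply: lt_le_trans (m_val_ge_cone_hull c_neq0 V_hyp phi_sel r_hull).
by rewrite lte_fin; lra.
Qed.
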